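(* The problems EE-NCL and EE-ANCL coincide: an NCL machine with two distinguished edges $e_a,e_b$ and target orientations for them is a yes-instance of EE-NCL if and only if it is a yes-instance of EE-ANCL.
   Context: An NCL machine is an undirected 3-connected 3-regular planar graph whose vertices are of two types, AND and OR; of the three edges incident to an AND vertex, one is designated its output edge and the other two its input edges. A legal configuration is an orientation of all edges such that (i) for each AND vertex, either its output edge is directed inward or both its input edges are directed inward, and (ii) for each OR vertex, at least one of its three incident edges is directed inward. A legal move reverses a single edge so that the resulting configuration is again legal. EE-NCL (Edge-to-Edge for NCL machines): given an NCL machine with two distinguished edges $e_a,e_b$ and a target orientation for each, decide whether there exist legal configurations $A$ and $B$ such that $e_a$ has its target orientation in $A$, $e_b$ has its target orientation in $B$, and some finite sequence of legal moves leads from $A$ to $B$ (edges may be reversed arbitrarily many times). EE-ANCL (asynchronous version): same input and question, except that moves are asynchronous in continuous time over a bounded timespan: any edge may start reversing at any time, and its reversal phase lasts some strictly positive amount of time (no two reversal phases of the same edge overlap, but different edges may be reversing simultaneously); while an edge is in its reversal phase its orientation is undefined and it is directed toward neither endpoint; at every time both vertex constraints (i) and (ii) must hold, counting only edges with defined orientation; and no edge is reversed infinitely many times in a bounded timespan. The question is whether one can go in this way from a legal configuration $A$ with $e_a$ in its target orientation to a configuration $B$ with $e_b$ in its target orientation. *)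

From Stdlib Require Import Reals.
From HB Require Import structures.
From mathcomp Require Import all_boot all_fingroup.

Set Implicit Arguments.
Unset Strict Implicit.
Unset Printing Implicit Defensive.

Section NCL.

(* An orientation [c : E -> bool] directs edge e
   from (ends e).1 to (ends e).2 when [c e = true], and the other way when
   [c e = false]. *)
Variables (V E : finType) (ends : E -> V * V).

Definition incident (v : V) (e : E) : bool :=
  ((ends e).1 == v) || ((ends e).2 == v).

Definition simple_graph : Prop :=
  (forall e, (ends e).1 != (ends e).2) /\
  (forall e f, [set (ends e).1; (ends e).2] = [set (ends f).1; (ends f).2] -> e = f).

Definition cubic : Prop := forall v : V, #|[set e | incident v e]| = 3.

Definition adj (u w : V) : bool :=
  [exists e, (ends e == (u, w)) || (ends e == (w, u))].

Definition three_connected : Prop :=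
  3 < #|V| /\
  forall S : {set V}, #|S| <= 2 -> forall u w : V, u \notin S -> w \notin S ->
    connect (fun x y => [&& x \notin S, y \notin S & adj x y]) u w.

(* Planarity via rotation systems (combinatorial maps, Heffter-Edmonds):
   darts are pairs (e, b); dart (e,true) sits at (ends e).1, (e,false) at
   (ends e).2.  A rotation system is a permutation sigma of darts whose
   cycles are exactly the sets of darts at each vertex; faces are the cycles
   of phi = sigma o alpha, alpha the dart involution.  A connected graph is
   planar iff some rotation system satisfies Euler's formula V - E + F = 2. *)
Definition dvert (d : E * bool) : V := if d.2 then (ends d.1).1 else (ends d.1).2.
Definition alpha (d : E * bool) : E * bool := (d.1, ~~ d.2).

Definition planar : Prop :=
  exists sigma phi : {perm (E * bool)},
    [/\ (forall d, dvert (sigma d) = dvert d),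
        (forall d d', dvert d = dvert d' -> d' \in porbit sigma d),
        (forall d, phi d = sigma (alpha d)) &
        #|V| + #|porbits phi| = #|E| + 2].

(* NCL machine: vertex types (isAND v = true for AND vertices, false for OR)
   and designated output edge [out v] of each AND vertex; the input edges of
   an AND vertex are its two other incident edges. *)
Variables (isAND : V -> bool) (out : V -> E).

Definition ncl_machine : Prop :=
  [/\ simple_graph, cubic, three_connected, planar &
      forall v, isAND v -> incident v (out v)].

Definition head (b : bool) (e : E) : V := if b then (ends e).2 else (ends e).1.

(* partial orientations: None = edge currently reversing (undefined) *)
Definition inward (o : E -> option bool) (e : E) (v : V) : bool :=
  if o e is Some b then head b e == v else false.

Definition vertex_ok (o : E -> option bool) (v : V) : bool :=
  if isAND v then
    inward o (out v) v ||
    [forall e, (incident v e && (e != out v)) ==> inward o e v]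
  else [exists e, incident v e && inward o e v].

Definition constraints_ok (o : E -> option bool) : bool := [forall v, vertex_ok o v].

Definition legal (c : {ffun E -> bool}) : bool := constraints_ok (fun e => Some (c e)).

Definition legal_move (c c' : {ffun E -> bool}) : bool :=
  [&& legal c, legal c' & #|[set e | c e != c' e]| == 1].

Definition EE_NCL (ea : E) (ta : bool) (eb : E) (tb : bool) : Prop :=
  exists A B : {ffun E -> bool},
    [/\ legal A, legal B, A ea = ta, B eb = tb & connect legal_move A B].

Definition Rleb (x y : R) : bool := if Rle_dec x y then true else false.
Definition Rltb (x y : R) : bool := if Rlt_dec x y then true else false.

Definition wf_phases (P : E -> seq (R * R)) : Prop :=
  forall e,
    (forall i, i < size (P e) ->
       Rlt (nth (R0, R0) (P e) i).1 (nth (R0, R0) (P e) i).2) /\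
    (forall i j, i < j -> j < size (P e) ->
       Rle (nth (R0, R0) (P e) i).2 (nth (R0, R0) (P e) j).1 \/
       Rle (nth (R0, R0) (P e) j).2 (nth (R0, R0) (P e) i).1).

Definition state_at (A : {ffun E -> bool}) (P : E -> seq (R * R)) (tau : R)
    (e : E) : option bool :=
  if has (fun p => Rleb p.1 tau && Rltb tau p.2) (P e) then None
  else Some (xorb (A e) (odd (count (fun p => Rleb p.2 tau) (P e)))).

Definition final_conf (A : {ffun E -> bool}) (P : E -> seq (R * R)) (e : E) : bool :=
  xorb (A e) (odd (size (P e))).

Definition EE_ANCL (ea : E) (ta : bool) (eb : E) (tb : bool) : Prop :=
  exists (A : {ffun E -> bool}) (P : E -> seq (R * R)),
    [/\ legal A, wf_phases P,
        (forall tau : R, constraints_ok (state_at A P tau)),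
        A ea = ta & final_conf A P eb = tb].

End NCL.

From Pilot Require Import Defs.
From Stdlib Require Import Reals Lra.
From HB Require Import structures.
From mathcomp Require Import all_boot all_fingroup.

Set Implicit Arguments.
Unset Strict Implicit.
Unset Printing Implicit Defensive.

(* A sequence of legal moves becomes an asynchronous schedule by giving the
   i-th move the reversal phase [i, i+1): while an edge reverses, each vertex
   sees the constraints of whichever of the two surrounding configurations does
   not point that edge into it, so they still hold.  Conversely, an
   asynchronous schedule is made sequential by performing its reversals in the
   order of their end times: after the reversal ending at time t, the
   configuration agrees on every defined edge with the asynchronous state at a
   time just before t by which all reversals performed so far have started,
   hence it is legal. *)

Lemma RlebP (x y : R) : reflect (Rle x y) (Rleb x y).
Proof. by rewrite /Rleb; case: Rle_dec => h; constructor. Qed.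

Lemma RltbP (x y : R) : reflect (Rlt x y) (Rltb x y).
Proof. by rewrite /Rltb; case: Rlt_dec => h; constructor. Qed.

Lemma exists_upper_bound_below (r0 t : R) (l : seq R) :
  Rlt r0 t -> all (Rltb^~ t) l ->
  exists2 tau, Rlt tau t & all (Rleb^~ tau) (r0 :: l).
Proof.
move=> r0t; elim: l => [|r l IH] /=; first by exists r0; rewrite // andbT; apply/RlebP; lra.
case/andP=> /RltbP rt /IH[tau taut /andP[r0tau ltau]].
exists (Rmax r tau); first exact: Rmax_lub_lt.
have le_max : forall x, Rleb x tau -> Rleb x (Rmax r tau).
  by move=> x /RlebP xtau; apply/RlebP; apply: Rle_trans xtau (Rmax_r _ _).
rewrite le_max //= (sub_all le_max ltau) andbT.
by apply/RlebP; apply: Rmax_l.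
Qed.

Section NCLMachine.
Variables (V E : finType) (ends : E -> V * V) (isAND : V -> bool) (out : V -> E).

Local Notation ok := (constraints_ok ends isAND out).
Local Notation legal := (legal ends isAND out).
Local Notation legal_move := (legal_move ends isAND out).

Lemma vertex_ok_mono (o o' : E -> option bool) (v : V) :
  (forall e, inward ends o' e v -> inward ends o e v) ->
  vertex_ok ends isAND out o' v -> vertex_ok ends isAND out o v.
Proof.
move=> sub; rewrite /vertex_ok; case: isAND.
- case/orP=> [/sub -> //|/forallP all_in]; apply/orP; right.
  by apply/forallP=> e; apply/implyP=> /(implyP (all_in e)) /sub.
- by case/existsP=> e /andP[ve /sub in_e]; apply/existsP; exists e; rewrite ve.
Qed.

Lemma constraints_ok_refine (o o' : E -> option bool) :
  (forall e b, o' e = Some b -> o e = Some b) -> ok o' -> ok o.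
Proof.
move=> refine /forallP ok'; apply/forallP=> v; apply: vertex_ok_mono (ok' v) => e.
by rewrite /inward; case E': (o' e) => [b|] //; rewrite (refine _ _ E').
Qed.

Definition flip_edge (c : {ffun E -> bool}) (e0 : E) : {ffun E -> bool} :=
  [ffun e => xorb (e == e0) (c e)].

Lemma legal_moveP (c c' : {ffun E -> bool}) :
  reflect [/\ legal c, legal c' & exists e0, c' = flip_edge c e0] (legal_move c c').
Proof.
have flipped e0 : [set e | c e != flip_edge c e0 e] = [set e0].
  by apply/setP=> e; rewrite !inE ffunE; case: (e == e0); case: (c e).
apply: (iffP and3P) => -[lc lc'].
- case/cards1P=> e0 diff; split=> //; exists e0; apply/ffunP=> e.
  move/setP: diff => /(_ e); rewrite !inE ffunE.
  by case: (e == e0); case: (c e); case: (c' e).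
- by case=> e0 c'E; split; rewrite // c'E flipped cards1.
Qed.

Definition reversing (c : {ffun E -> bool}) (e0 : E) (e : E) : option bool :=
  if e == e0 then None else Some (c e).

(* At each vertex, the reversing configuration coincides with whichever of [c]
   and [flip_edge c e0] does not point [e0] into that vertex. *)
Lemma reversing_ok (c : {ffun E -> bool}) (e0 : E) :
  (ends e0).1 != (ends e0).2 -> legal c -> legal (flip_edge c e0) ->
  ok (reversing c e0).
Proof.
move=> no_loop /forallP lc /forallP lc'; apply/forallP=> v.
have [into_v|not_into_v] := eqVneq (Defs.head ends (c e0) e0) v.
- apply: vertex_ok_mono (lc' v) => e; rewrite /inward /reversing ffunE.
  case: (eqVneq e e0) => [->|_ //]; rewrite -into_v /Defs.head.
  by case: (c e0) no_loop => /= /negbTE; rewrite // eq_sym => ->.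
- apply: vertex_ok_mono (lc v) => e; rewrite /inward /reversing.
  by case: (eqVneq e e0) => [->|//]; rewrite (negbTE not_into_v).
Qed.

Definition schedule_ok (A : {ffun E -> bool}) (P : E -> seq (R * R)) : Prop :=
  wf_phases P /\ forall tau, ok (state_at A P tau).

Definition ends_by (P : E -> seq (R * R)) (T : R) : Prop :=
  forall e, all (fun p => Rleb p.2 T) (P e).

Definition final_config (A : {ffun E -> bool}) (P : E -> seq (R * R)) :
  {ffun E -> bool} := [ffun e => final_conf A P e].

Definition append_phase (P : E -> seq (R * R)) (e0 : E) (p : R * R) (e : E) :
  seq (R * R) := if e == e0 then rcons (P e) p else P e.

Lemma wf_append_phase P e0 (T T' : R) :
  wf_phases P -> ends_by P T -> Rlt T T' -> wf_phases (append_phase P e0 (T, T')).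
Proof.
move=> wfP endT TT' e; rewrite /append_phase; case: eqVneq => _; last exact: wfP.
have [lt_phase disjoint] := wfP e; rewrite size_rcons; split.
- move=> i; rewrite ltnS leq_eqVlt nth_rcons => /orP[/eqP ->|ilt].
    by rewrite ltnn eqxx.
  by rewrite ilt; apply: lt_phase.
- move=> i j ij; rewrite ltnS leq_eqVlt !nth_rcons => /orP[/eqP jE|jlt].
    rewrite jE ltnn eqxx -jE ij; left.
    by apply/RlebP; apply: (all_nthP _ (endT e)); rewrite -jE.
  by rewrite jlt (ltn_trans ij jlt); apply: disjoint.
Qed.

Lemma state_at_append_before A P e0 (T T' tau : R) e :
  Rlt tau T -> Rlt T T' ->
  state_at A (append_phase P e0 (T, T')) tau e = state_at A P tau e.
Proof.
move=> tauT TT'; rewrite /state_at /append_phase; case: eqVneq => // _.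
rewrite has_rcons -cats1 count_cat /=.
have [Ttau|] := RlebP T tau; first lra.
by case: RlebP => [T'tau|]; [lra | rewrite !addn0].
Qed.

Lemma state_at_append_after A P e0 (T T' tau : R) e :
  ends_by P T -> Rle T tau ->
  state_at A (append_phase P e0 (T, T')) tau e =
  if (e == e0) && Rltb tau T' then None
  else Some (xorb (e == e0) (final_conf A P e)).
Proof.
move=> endT Ttau.
have not_running : ~~ has (fun p => Rleb p.1 tau && Rltb tau p.2) (P e).
  rewrite -all_predC; apply: sub_all (endT e) => p /RlebP pT /=.
  by apply/nandP; right; apply/RltbP; lra.
have all_done : count (fun p => Rleb p.2 tau) (P e) = size (P e).
  apply/eqP; rewrite -all_count; apply: sub_all (endT e) => p /RlebP pT.
  by apply/RlebP; lra.
rewrite /state_at /final_conf /append_phase; case: eqVneq => _ /=.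
- rewrite has_rcons -cats1 count_cat (negbTE not_running) all_done /=.
  have -> : Rleb T tau by apply/RlebP.
  case: (RltbP tau T') => /= [//|T'tau]; have -> : Rleb T' tau by apply/RlebP; lra.
  by rewrite addn1 /=; case: (A e); case: (odd _).
- by rewrite (negbTE not_running) all_done.
Qed.

Lemma schedule_append A P (T : R) c :
  (forall e, (ends e).1 != (ends e).2) ->
  schedule_ok A P -> ends_by P T -> legal_move (final_config A P) c ->
  exists P', [/\ schedule_ok A P', ends_by P' (Rplus T 1) & final_config A P' = c].
Proof.
move=> no_loop [wfP okP] endT /legal_moveP[lfin lc [e0 c_flip]]; subst c.
have TT1 : Rlt T (Rplus T 1) by lra.
exists (append_phase P e0 (T, Rplus T 1)); split.
- split; first exact: wf_append_phase.
  move=> tau; have [tauT|Ttau] := Rlt_le_dec tau T.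
    apply: constraints_ok_refine (okP tau) => e b <-.
    exact: state_at_append_before.
  case: (Rlt_le_dec tau (Rplus T 1)) => [tauT1|T1tau].
  + apply: constraints_ok_refine (reversing_ok (no_loop e0) lfin lc) => e b.
    rewrite /reversing state_at_append_after //; have /RltbP -> := tauT1.
    by case: eqVneq => //= _ <-; rewrite ffunE.
  + apply: constraints_ok_refine lc => e b <-.
    rewrite state_at_append_after //; have -> : Rltb tau (Rplus T 1) = false.
      by apply/RltbP; lra.
    by rewrite andbF !ffunE.
- move=> e; rewrite /append_phase; case: eqVneq => _; last first.
    by apply: sub_all (endT e) => p /RlebP pT; apply/RlebP; lra.
  rewrite all_rcons /=; apply/andP; split; first by apply/RlebP; lra.
  by apply: sub_all (endT e) => p /RlebP pT; apply/RlebP; lra.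
- apply/ffunP=> e; rewrite !ffunE /final_conf /append_phase.
  case: eqVneq => _ //; rewrite size_rcons /=.
  by case: (A e); case: (odd _).
Qed.

Lemma schedule_of_connect A B :
  (forall e, (ends e).1 != (ends e).2) -> legal A -> connect legal_move A B ->
  exists P T, [/\ schedule_ok A P, ends_by P T & final_config A P = B].
Proof.
move=> no_loop lA /connectP[p + ->]; elim/last_ind: p => [_|p c IH].
  exists (fun _ => [::]), R0; split=> //.
  - split=> [e|tau]; first by split=> // i j.
    by apply: constraints_ok_refine lA => e b <-; rewrite /state_at /=; case: (A e).
  - by apply/ffunP=> e; rewrite !ffunE /final_conf /=; case: (A e).
rewrite rcons_path last_rcons => /andP[/IH[P [T [okP endT finP]]] mv].
rewrite -finP in mv; have [P' [okP' endP' finP']] := schedule_append no_loop okP endT mv.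
by exists P', (Rplus T 1).
Qed.

Lemma ncl_to_ancl ea ta eb tb :
  (forall e, (ends e).1 != (ends e).2) ->
  EE_NCL ends isAND out ea ta eb tb -> EE_ANCL ends isAND out ea ta eb tb.
Proof.
move=> no_loop [A [B [lA _ Aa Bb AB]]].
have [P [_ [[wfP okP] _ finP]]] := schedule_of_connect no_loop lA AB.
by exists A, P; split=> //; rewrite -Bb -finP ffunE.
Qed.

Section Replay.
Variables (A : {ffun E -> bool}) (P : E -> seq (R * R)).

Definition phase (y : E * nat) : R * R := nth (R0, R0) (P y.1) y.2.

Definition events : seq (E * nat) :=
  [seq (e, i) | e <- enum E, i <- iota 0 (size (P e))].

Lemma count_events e (q : pred (R * R)) :
  count (fun y => (y.1 == e) && q (phase y)) events = count q (P e).
Proof.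
suff count_in s : uniq s ->
    count (fun y => (y.1 == e) && q (phase y))
      [seq (f, i) | f <- s, i <- iota 0 (size (P f))] =
    if e \in s then count q (P e) else 0.
  by rewrite count_in ?enum_uniq // mem_enum.
elim: s => [|f s IH] //= /andP[f_s uniq_s]; rewrite count_cat count_map IH //.
rewrite in_cons; case: (eqVneq e f) => [ef|fe] /=.
- subst f; rewrite (negbTE f_s) addn0 -{2}(mkseq_nth (R0, R0) (P e)) count_map.
  by apply: eq_count => i /=; rewrite eqxx.
- by rewrite (eq_count (a2 := pred0)) ?count_pred0 // => i /=; rewrite eq_sym (negbTE fe).
Qed.

Lemma phase_lt y : wf_phases P -> y \in events -> Rlt (phase y).1 (phase y).2.
Proof.
move=> wfP /allpairsPdep[e [i [_ + ->]]]; rewrite mem_iota add0n /phase /=.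
exact: (wfP e).1.
Qed.

Definition replay (s : seq (E * nat)) : {ffun E -> bool} :=
  [ffun e => xorb (A e) (odd (count (fun y => y.1 == e) s))].

Lemma replay_nil : replay [::] = A.
Proof. by apply/ffunP=> e; rewrite ffunE /=; case: (A e). Qed.

Lemma replay_rcons s y : replay (rcons s y) = flip_edge (replay s) y.1.
Proof.
apply/ffunP=> e; rewrite !ffunE -cats1 count_cat /= addn0 oddD eq_sym.
by case: (e == y.1); case: (A e); case: (odd _).
Qed.

Lemma replay_events : replay events = final_config A P.
Proof.
apply/ffunP=> e; rewrite !ffunE /final_conf -(count_predT (P e)) -count_events.
by congr (xorb _ (odd _)); apply: eq_count => y; rewrite andbT.
Qed.

(* An edge that is not reversing at [tau] has finished exactly the phases it
   has started. *)
Lemma state_at_replay L1 L2 tau :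
  perm_eq (L1 ++ L2) events ->
  {in L1, forall y, Rle (phase y).1 tau} -> {in L2, forall y, Rlt tau (phase y).2} ->
  forall e b, state_at A P tau e = Some b -> Some (replay L1 e) = Some b.
Proof.
move=> permL started pending e b; rewrite /state_at.
set running := fun p => Rleb p.1 tau && Rltb tau p.2.
have split_count q : count q (P e) =
    count (fun y => (y.1 == e) && q (phase y)) L1 +
    count (fun y => (y.1 == e) && q (phase y)) L2.
  by rewrite -count_events -(seq.permP permL) count_cat.
case: ifP => // idle [<-]; rewrite ffunE; congr (Some (xorb _ (odd _))).
move: idle; rewrite has_count split_count => /negbT; rewrite -leqNgt leqn0 addn_eq0.
case/andP=> + _; rewrite eqn0Ngt -has_count => /hasPn idle1.
rewrite split_count (eq_in_count (a2 := pred0) (s := L2)) ?count_pred0 ?addn0.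
- apply: eq_in_count => y yL1 /=; case: eqVneq (idle1 y yL1) => //= _.
  have start_y := started y yL1.
  rewrite /running negb_and => /orP[/RlebP //|/RltbP end_y].
  by symmetry; apply/RlebP; lra.
- move=> y /pending end_y /=; rewrite andbC.
  by case: RlebP => //= ?; lra.
Qed.

Definition by_end : rel (E * nat) := fun y z => Rleb (phase y).2 (phase z).2.

Definition sorted_events : seq (E * nat) := sort by_end events.

Lemma pairwise_sorted_events : pairwise by_end sorted_events.
Proof.
have tr : transitive by_end.
  by move=> y x z /RlebP ? /RlebP ?; apply/RlebP; lra.
have tot : total by_end.
  by move=> y z; rewrite /by_end; case: RlebP => //= ?; apply/RlebP; lra.
by rewrite -sorted_pairwise //; apply: sort_sorted.
Qed.

Lemma replay_prefix_legal L1 x L2 :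
  wf_phases P -> (forall tau, ok (state_at A P tau)) ->
  sorted_events = L1 ++ x :: L2 -> legal (replay (rcons L1 x)).
Proof.
move=> wfP okP sortedE.
have permL : perm_eq (rcons L1 x ++ L2) events by rewrite cat_rcons -sortedE perm_sort.
have in_events y : y \in rcons L1 x ++ L2 -> y \in events by rewrite (perm_mem permL).
have := pairwise_sorted_events; rewrite sortedE pairwise_cat /=.
case/and4P=> /allrelP before_x _ after_x _.
have end_le y : y \in rcons L1 x -> Rle (phase y).2 (phase x).2.
  rewrite mem_rcons in_cons => /orP[/eqP ->|yL1]; first exact: Rle_refl.
  by apply/RlebP; apply: before_x; rewrite ?in_cons ?eqxx.
have x_in : x \in rcons L1 x by rewrite mem_rcons mem_head.
have start_lt y : y \in rcons L1 x -> Rlt (phase y).1 (phase x).2.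
  move=> yL; apply: Rlt_le_trans (end_le y yL).
  by apply: phase_lt; rewrite // in_events // mem_cat yL.
have L1_below : all (Rltb^~ (phase x).2) [seq (phase y).1 | y <- L1].
  rewrite all_map; apply/allP=> y yL1 /=; apply/RltbP/start_lt.
  by rewrite mem_rcons in_cons yL1 orbT.
have [tau tau_lt] := exists_upper_bound_below (start_lt x x_in) L1_below.
rewrite /= all_map => /andP[/RlebP x_started /allP L1_started].
apply: constraints_ok_refine (okP tau) => e b.
apply: state_at_replay permL _ _ e b => y.
- rewrite mem_rcons in_cons => /orP[/eqP -> //|yL1].
  by apply/RlebP; apply: L1_started.
- by move=> yL2; apply: Rlt_le_trans tau_lt _; apply/RlebP; apply: (allP after_x).
Qed.

Lemma replay_perm s t : perm_eq s t -> replay s = replay t.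
Proof. by move=> st; apply/ffunP=> e; rewrite !ffunE (seq.permP st). Qed.

Lemma connect_replay L :
  (forall L1 L2, L = L1 ++ L2 -> legal (replay L1)) ->
  connect legal_move (replay [::]) (replay L).
Proof.
elim/last_ind: L => [|L x IH] prefix_legal; first exact: connect0.
apply: connect_trans (IH _) (connect1 _).
  by move=> L1 L2 LE; apply: (prefix_legal _ (rcons L2 x)); rewrite LE rcons_cat.
apply/legal_moveP; split; last by exists x.1; rewrite replay_rcons.
- by apply: (prefix_legal _ [:: x]); rewrite cats1.
- by apply: (prefix_legal _ [::]); rewrite cats0.
Qed.

Lemma sorted_prefix_legal L1 L2 :
  legal A -> wf_phases P -> (forall tau, ok (state_at A P tau)) ->
  sorted_events = L1 ++ L2 -> legal (replay L1).
Proof.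
move=> lA wfP okP; case/lastP: L1 => [_|L1 x]; first by rewrite replay_nil.
by rewrite cat_rcons; apply: replay_prefix_legal.
Qed.

Lemma final_config_reachable :
  legal A -> wf_phases P -> (forall tau, ok (state_at A P tau)) ->
  legal (final_config A P) /\ connect legal_move A (final_config A P).
Proof.
move=> lA wfP okP; have prefix_legal := sorted_prefix_legal lA wfP okP.
rewrite -replay_events -replay_nil -(replay_perm (permEl (perm_sort by_end events))).
split; last exact: connect_replay.
by apply: (prefix_legal _ [::]); rewrite cats0.
Qed.

End Replay.

Lemma ancl_to_ncl ea ta eb tb :
  EE_ANCL ends isAND out ea ta eb tb -> EE_NCL ends isAND out ea ta eb tb.
Proof.
case=> A [P [lA wfP okP Aa Pb]].
have [lfin AB] := final_config_reachable lA wfP okP.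
by exists A, (final_config A P); split; rewrite ?ffunE.
Qed.

End NCLMachine.

Theorem theorem1 (V E : finType) (ends : E -> V * V) (isAND : V -> bool)
    (out : V -> E) (ea eb : E) (ta tb : bool) :
  ncl_machine ends isAND out ->
  (EE_NCL ends isAND out ea ta eb tb <-> EE_ANCL ends isAND out ea ta eb tb).
Proof.
case=> [[no_loop _] _ _ _ _].
by split; [exact: ncl_to_ancl no_loop | exact: ancl_to_ncl].
Qed.
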